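(* Let $\bm{G}_t\in\mathbb{R}^{n_1\times n_2}$, $\epsilon_t>0$, $\bm{L}_t=\epsilon_t\bm{I}_{n_1}+\mathrm{diag}(\bm{G}_t\bm{G}_t^T)$, $\bm{R}_t=\epsilon_t\bm{I}_{n_2}+\mathrm{diag}(\bm{G}_t^T\bm{G}_t)$, and let $\bm{X}_t,\bm{X}\in\mathbb{R}^{n_1\times n_2}$ be rank-$r$ matrices, $\bm{X}_t=\bm{U}_t\bm{\Sigma}_t\bm{V}_t^T$ a compact SVD. Let $\widetilde{\mathcal{P}}_{\mathbb{T}_t}$ be the orthogonal projector, with respect to $\langle\cdot,\cdot\rangle_{\mathcal{W}_t}$, onto $\mathbb{T}_t=\{\bm{U}_t\bm{Q}^T+\bm{P}\bm{V}_t^T:\bm{P}\in\mathbb{R}^{n_1\times r},\bm{Q}\in\mathbb{R}^{n_2\times r}\}$. Then $$\big\|(\mathcal{I}-\widetilde{\mathcal{P}}_{\mathbb{T}_t})\bm{X}\big\|_{\mathcal{W}_t}\le\frac{\mu_t^{5/4}}{\nu_t^{7/4}\,\sigma_{\min}(\bm{X})}\,\|\bm{X}-\bm{X}_t\|_{\mathcal{W}_t}^2,$$ where $\nu_t=\epsilon_t^{1/2}$ and $\mu_t=(\epsilon_t+\|\bm{G}_t\|_\vee^2)^{1/2}$.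
   Context: $\mathrm{diag}(\bm{M})$ keeps only the diagonal of $\bm{M}$. $\langle\bm{Z},\bm{Y}\rangle_{\mathcal{W}_t}=\langle\bm{L}_t^{1/4}\bm{Z}\bm{R}_t^{1/4},\bm{Y}\rangle$ with $\langle\bm{A},\bm{B}\rangle=\mathrm{trace}(\bm{A}^T\bm{B})$, and $\|\cdot\|_{\mathcal{W}_t}$ is the induced norm. $\mathcal{I}$ is the identity. $\|\bm{Z}\|_\vee=\max\{\max_i\|\bm{Z}(i,:)\|_2,\max_j\|\bm{Z}(:,j)\|_2\}$. $\sigma_{\min}(\bm{X})$ is the smallest nonzero singular value of $\bm{X}$. *)

From HB Require Import structures.
From mathcomp Require Import all_boot all_order all_algebra.
Set Implicit Arguments. Unset Strict Implicit. Unset Printing Implicit Defensive.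
Import Order.TTheory GRing.Theory Num.Theory.
Local Open Scope ring_scope.

Section Defs.
Variable R : rcfType.

Definition root4 (x : R) : R := Num.sqrt (Num.sqrt x).

Definition diag_part n (M : 'M[R]_n) : 'M[R]_n :=
  \matrix_(i, j) ((i == j)%:R * M i j).

Definition Lmat n1 n2 (eps : R) (G : 'M[R]_(n1, n2)) : 'M[R]_n1 :=
  eps%:M + diag_part (G *m G^T).
Definition Rmat n1 n2 (eps : R) (G : 'M[R]_(n1, n2)) : 'M[R]_n2 :=
  eps%:M + diag_part (G^T *m G).

(* M^{1/4} for a diagonal matrix M with nonnegative diagonal *)
Definition diag_root4 n (M : 'M[R]_n) : 'M[R]_n :=
  \matrix_(i, j) ((i == j)%:R * root4 (M i j)).

(* <Z, Y>_{W_t} = <L^{1/4} Z R^{1/4}, Y> with <A,B> = trace(A^T B) *)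
Definition winner n1 n2 (eps : R) (G : 'M[R]_(n1, n2)) (Z Y : 'M[R]_(n1, n2)) : R :=
  \tr ((diag_root4 (Lmat eps G) *m Z *m diag_root4 (Rmat eps G))^T *m Y).

Definition wnorm n1 n2 (eps : R) (G : 'M[R]_(n1, n2)) (Z : 'M[R]_(n1, n2)) : R :=
  Num.sqrt (winner eps G Z Z).

Definition vee_norm n1 n2 (Z : 'M[R]_(n1, n2)) : R :=
  Num.max (\big[Num.max/0]_(i < n1) Num.sqrt (\sum_(j < n2) Z i j ^+ 2))
          (\big[Num.max/0]_(j < n2) Num.sqrt (\sum_(i < n1) Z i j ^+ 2)).

Definition in_tangent n1 n2 r (U : 'M[R]_(n1, r)) (V : 'M[R]_(n2, r))
  (Z : 'M[R]_(n1, n2)) : Prop :=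
  exists (P : 'M[R]_(n1, r)) (Q : 'M[R]_(n2, r)), Z = U *m Q^T + P *m V^T.

Definition is_wproj n1 n2 r (eps : R) (G : 'M[R]_(n1, n2))
  (U : 'M[R]_(n1, r)) (V : 'M[R]_(n2, r)) (Pr : 'M[R]_(n1, n2) -> 'M[R]_(n1, n2)) : Prop :=
  forall Z, in_tangent U V (Pr Z) /\
    (forall W, in_tangent U V W -> winner eps G (Z - Pr Z) W = 0).

Definition is_compact_svd n1 n2 r (X : 'M[R]_(n1, n2)) (U : 'M[R]_(n1, r))
  (S : 'M[R]_r) (V : 'M[R]_(n2, r)) : Prop :=
  [/\ X = U *m S *m V^T, U^T *m U = 1%:M, V^T *m V = 1%:M,
      is_diag_mx S & forall i, 0 < S i i].

Definition is_singular_value n1 n2 (X : 'M[R]_(n1, n2)) (s : R) : Prop :=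
  0 <= s /\ exists (u : 'cV[R]_n1) (v : 'cV[R]_n2),
    [/\ u^T *m u = 1%:M, v^T *m v = 1%:M, X *m v = s *: u & X^T *m u = s *: v].

Definition is_sigma_min n1 n2 (X : 'M[R]_(n1, n2)) (s : R) : Prop :=
  [/\ 0 < s, is_singular_value X s &
      forall s', 0 < s' -> is_singular_value X s' -> s <= s'].

End Defs.

From mathcomp Require Import all_boot all_order all_algebra.
Import Order.TTheory GRing.Theory Num.Theory Num.Def.
Local Open Scope ring_scope.
From mathcomp Require Import complex spectral sesquilinear ring.

(* Since L_t and R_t are diagonal, <Z, Y>_{W_t} is the Frobenius product weighted
   entrywise by L_t(i,i)^{1/4} R_t(j,j)^{1/4}, a weight lying in [nu_t, mu_t].
   Put P = I - U_t U_t^T, Q = I - V_t V_t^T and E = X - X_t.  Since X - P X Q lies in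
   T_t, the projection property gives |(I - P_T) X|_W^2 <= |P X Q|_W^2 <= mu_t |P X Q|_F^2.
   As P X_t = 0 = X_t Q, we have P X = P E and X Q = E Q.  Each column P X (Q e_j) equals
   P E m_j, where m_j is the minimum-norm solution of X m = X Q e_j; every nonzero
   eigenvalue of X^T X is the square of a singular value, so sigma_min |m_j| <= |E Q e_j|.
   Hence sigma_min |P X Q|_F <= |E|_F^2 <= |E|_W^2 / nu_t, and the left-hand side is at
   most mu_t^{1/2} / (nu_t sigma_min) |E|_W^2, which is below the stated constant because
   nu_t <= mu_t. *)

Set Implicit Arguments.
Unset Strict Implicit.
Unset Printing Implicit Defensive.

Lemma col_mulmx (R : pzSemiRingType) m n p (A : 'M[R]_(m, n)) (B : 'M[R]_(n, p)) j :
  col j (A *m B) = A *m col j B.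
Proof. by rewrite !colE mulmxA. Qed.

Lemma psumr2_eq0P (R : numDomainType) m n (F : 'I_m -> 'I_n -> R) :
  (forall i j, 0 <= F i j) -> \sum_i \sum_j F i j = 0 -> forall i j, F i j = 0.
Proof.
move=> F_ge0 F0 i j; apply: psumr_eq0P (fun j _ => F_ge0 i j) _ j isT.
exact: psumr_eq0P (fun i _ => sumr_ge0 _ (fun j _ => F_ge0 i j)) F0 i isT.
Qed.

Section Frobenius.
Variable R : realFieldType.

Definition sqfrob m n (M : 'M[R]_(m, n)) : R := \sum_i \sum_j M i j ^+ 2.

Lemma sqfrob_ge0 m n (M : 'M[R]_(m, n)) : 0 <= sqfrob M.
Proof. by apply: sumr_ge0 => i _; apply: sumr_ge0 => j _; rewrite sqr_ge0. Qed.

Lemma sqfrob0_eq0 m n (M : 'M[R]_(m, n)) : sqfrob M = 0 -> M = 0.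
Proof.
move=> M0; apply/matrixP => i j; apply/eqP; rewrite mxE -sqrf_eq0; apply/eqP.
exact: psumr2_eq0P (fun i j => sqr_ge0 _) M0 i j.
Qed.

Lemma sqfrob_tr m n (M : 'M[R]_(m, n)) : sqfrob M = \tr (M^T *m M).
Proof.
rewrite /sqfrob /mxtrace exchange_big; apply: eq_bigr => j _; rewrite mxE.
by apply: eq_bigr => i _; rewrite mxE expr2.
Qed.

Lemma sqfrob_trmx m n (M : 'M[R]_(m, n)) : sqfrob M^T = sqfrob M.
Proof.
rewrite /sqfrob exchange_big; apply: eq_bigr => i _; apply: eq_bigr => j _.
by rewrite mxE.
Qed.

Lemma sqfrobZ m n (a : R) (M : 'M[R]_(m, n)) : sqfrob (a *: M) = a ^+ 2 * sqfrob M.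
Proof.
rewrite /sqfrob mulr_sumr; apply: eq_bigr => i _; rewrite mulr_sumr.
by apply: eq_bigr => j _; rewrite mxE exprMn.
Qed.

Lemma sqfrob_col m n (M : 'M[R]_(m, n)) : sqfrob M = \sum_j sqfrob (col j M).
Proof.
rewrite /sqfrob exchange_big; apply: eq_bigr => j _; apply: eq_bigr => i _.
by rewrite big_ord1 mxE.
Qed.

Lemma sqfrob_cV n (v : 'cV[R]_n) : v^T *m v = (sqfrob v)%:M.
Proof. by rewrite sqfrob_tr trace_mx11 -mx11_scalar. Qed.

Lemma sqr_sum_mul_le n (x y : 'I_n -> R) :
  (\sum_i x i * y i) ^+ 2 <= (\sum_i x i ^+ 2) * (\sum_i y i ^+ 2).
Proof.
have lagrange : \sum_i \sum_j (x i * y j - x j * y i) ^+ 2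
    = 2 * ((\sum_i x i ^+ 2) * (\sum_i y i ^+ 2) - (\sum_i x i * y i) ^+ 2).
  have expand i j : (x i * y j - x j * y i) ^+ 2
      = x i ^+ 2 * y j ^+ 2 + y i ^+ 2 * x j ^+ 2 - 2 * (x i * y i) * (x j * y j).
    by ring.
  under eq_bigr do under eq_bigr do rewrite expand.
  rewrite expr2 !mulr_suml; under eq_bigr do rewrite sumrB big_split -!mulr_sumr.
  by rewrite sumrB big_split -!mulr_suml -mulr_sumr /=; ring.
rewrite -subr_ge0 -(pmulr_rge0 _ (ltr0Sn R 1)) -lagrange.
by apply: sumr_ge0 => i _; apply: sumr_ge0 => j _; rewrite sqr_ge0.
Qed.

Lemma sqfrob_mulmx_le m n p (A : 'M[R]_(m, n)) (B : 'M[R]_(n, p)) :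
  sqfrob (A *m B) <= sqfrob A * sqfrob B.
Proof.
rewrite /sqfrob [X in _ <= _ * X]exchange_big mulr_suml; apply: ler_sum => i _.
rewrite mulr_sumr; apply: ler_sum => j _; rewrite mxE.
exact: sqr_sum_mul_le.
Qed.

Lemma sqfrob_compl_proj_mul_le n k p (U : 'M[R]_(n, k)) (M : 'M[R]_(n, p)) :
  U^T *m U = 1%:M -> sqfrob ((1%:M - U *m U^T) *m M) <= sqfrob M.
Proof.
move=> UU; set P := 1%:M - U *m U^T.
have PT : P^T = P by rewrite /P linearB /= trmx1 trmx_mul trmxK.
have PP : P *m P = P.
  by rewrite /P mulmxBl mul1mx mulmxBr mulmx1 mulmxA -(mulmxA U) UU mulmx1 subrr subr0.
rewrite !sqfrob_tr trmx_mul PT mulmxA -(mulmxA M^T) PP /P mulmxBr mulmx1.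
rewrite mulmxBl raddfB /= gerBl // -!mulmxA mulmxA -[M^T *m U]trmxK trmx_mul trmxK.
by rewrite -sqfrob_tr sqfrob_ge0.
Qed.

Lemma sqfrob_mul_compl_proj_le n k p (V : 'M[R]_(n, k)) (M : 'M[R]_(p, n)) :
  V^T *m V = 1%:M -> sqfrob (M *m (1%:M - V *m V^T)) <= sqfrob M.
Proof.
move=> VV; rewrite -sqfrob_trmx -[sqfrob M]sqfrob_trmx trmx_mul.
rewrite linearB /= trmx1 trmx_mul trmxK.
exact: sqfrob_compl_proj_mul_le.
Qed.

End Frobenius.

Section WeightedFrobenius.
Variables (R : realFieldType) (m n : nat) (w : 'I_m -> 'I_n -> R).

Definition wdot (Z Y : 'M[R]_(m, n)) : R := \sum_i \sum_j w i j * (Z i j * Y i j).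

Lemma wdot_sqrD Z Y : wdot (Z + Y) (Z + Y) = wdot Z Z + 2 * wdot Z Y + wdot Y Y.
Proof.
rewrite /wdot mulr_sumr -!big_split /=; apply: eq_bigr => i _.
rewrite mulr_sumr -!big_split /=; apply: eq_bigr => j _.
by rewrite !mxE; ring.
Qed.

Lemma wdot_ge c Z : (forall i j, c <= w i j) -> c * sqfrob Z <= wdot Z Z.
Proof.
move=> cw; rewrite /wdot mulr_sumr; apply: ler_sum => i _.
rewrite mulr_sumr; apply: ler_sum => j _.
by rewrite -expr2 ler_wpM2r ?sqr_ge0.
Qed.

Lemma wdot_le c Z : (forall i j, w i j <= c) -> wdot Z Z <= c * sqfrob Z.
Proof.
move=> wc; rewrite /wdot mulr_sumr; apply: ler_sum => i _.
rewrite mulr_sumr; apply: ler_sum => j _.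
by rewrite -expr2 ler_wpM2r ?sqr_ge0.
Qed.

Hypothesis w_ge0 : forall i j, 0 <= w i j.

Lemma wdot_self_ge0 Z : 0 <= wdot Z Z.
Proof. by rewrite -(mul0r (sqfrob Z)) wdot_ge. Qed.

Lemma wdot_orth_le D W : wdot D W = 0 -> wdot D D <= wdot (D + W) (D + W).
Proof. by move=> DW; rewrite wdot_sqrD DW mulr0 addr0 lerDl wdot_self_ge0. Qed.

End WeightedFrobenius.

Lemma sqr_root4 (R : rcfType) (x : R) : 0 <= x -> root4 x ^+ 2 = Num.sqrt x.
Proof. by move=> x0; rewrite /root4 sqr_sqrtr ?sqrtr_ge0. Qed.

Lemma ler_root4 (R : rcfType) (x y : R) : x <= y -> root4 x <= root4 y.
Proof. by move=> xy; rewrite /root4; do 2 apply: ler_wsqrtr. Qed.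

Section WinnerWeights.
Variables (R : rcfType) (n1 n2 : nat) (eps : R) (G : 'M[R]_(n1, n2)).

Definition wweight i j := root4 (Lmat eps G i i) * root4 (Rmat eps G j j).

Lemma winnerE Z Y : winner eps G Z Y = wdot wweight Z Y.
Proof.
have diag_root4E n (M : 'M[R]_n) : diag_root4 M = diag_mx (\row_i root4 (M i i)).
  apply/matrixP => i j; rewrite !mxE.
  by have [->|] := eqVneq i j; rewrite ?mul1r ?mul0r ?mulr1n ?mulr0n.
rewrite /winner /wdot !diag_root4E /mxtrace exchange_big.
apply: eq_bigr => j _; rewrite mxE; apply: eq_bigr => i _.
by rewrite /wweight mul_mx_diag mul_diag_mx !mxE; ring.
Qed.

Lemma wnormE Z : wnorm eps G Z = Num.sqrt (wdot wweight Z Z).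
Proof. by rewrite /wnorm winnerE. Qed.

Lemma wweight_ge0 i j : 0 <= wweight i j.
Proof. by rewrite mulr_ge0 ?sqrtr_ge0. Qed.

Lemma Lmat_diag i : Lmat eps G i i = eps + \sum_j G i j ^+ 2.
Proof.
rewrite !mxE eqxx mulr1n mul1r; congr (_ + _).
by apply: eq_bigr => j _; rewrite mxE expr2.
Qed.

Lemma Rmat_diag j : Rmat eps G j j = eps + \sum_i G i j ^+ 2.
Proof.
rewrite !mxE eqxx mulr1n mul1r; congr (_ + _).
by apply: eq_bigr => i _; rewrite mxE expr2.
Qed.

Lemma vee_norm_ge0 : 0 <= vee_norm G.
Proof.
rewrite /vee_norm le_max; apply/orP; left.
by elim/big_ind: _ => // [x y hx hy|i _]; [rewrite le_max hx | exact: sqrtr_ge0].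
Qed.

Lemma sqrt_le_vee_norm (x : R) : 0 <= x -> Num.sqrt x <= vee_norm G -> x <= vee_norm G ^+ 2.
Proof.
by move=> x0 h; rewrite -[x]sqr_sqrtr // lerXn2r // nnegrE ?sqrtr_ge0 ?vee_norm_ge0.
Qed.

Lemma row_sqnorm_le_vee i : \sum_j G i j ^+ 2 <= vee_norm G ^+ 2.
Proof.
apply: sqrt_le_vee_norm; first by apply: sumr_ge0 => j _; rewrite sqr_ge0.
rewrite le_max; apply/orP; left.
exact: (le_bigmax _ (fun i => Num.sqrt (\sum_j G i j ^+ 2)) i).
Qed.

Lemma col_sqnorm_le_vee j : \sum_i G i j ^+ 2 <= vee_norm G ^+ 2.
Proof.
apply: sqrt_le_vee_norm; first by apply: sumr_ge0 => i _; rewrite sqr_ge0.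
rewrite le_max; apply/orP; right.
exact: (le_bigmax _ (fun j => Num.sqrt (\sum_i G i j ^+ 2)) j).
Qed.

Hypothesis eps_ge0 : 0 <= eps.

Lemma wweight_ge i j : Num.sqrt eps <= wweight i j.
Proof.
rewrite -sqr_root4 // expr2 ler_pM ?sqrtr_ge0 // ler_root4 // ?Lmat_diag ?Rmat_diag lerDl.
- by apply: sumr_ge0 => k _; rewrite sqr_ge0.
- by apply: sumr_ge0 => k _; rewrite sqr_ge0.
Qed.

Lemma wweight_le i j : wweight i j <= Num.sqrt (eps + vee_norm G ^+ 2).
Proof.
rewrite -sqr_root4 ?addr_ge0 ?sqr_ge0 // expr2 ler_pM ?sqrtr_ge0 // ler_root4 //.
- by rewrite Lmat_diag lerD2l row_sqnorm_le_vee.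
- by rewrite Rmat_diag lerD2l col_sqnorm_le_vee.
Qed.

End WinnerWeights.

Lemma compact_svd_compl_proj (R : rcfType) n1 n2 r (X : 'M[R]_(n1, n2))
    (U : 'M[R]_(n1, r)) (S : 'M[R]_r) (V : 'M[R]_(n2, r)) :
  is_compact_svd X U S V ->
  (1%:M - U *m U^T) *m X = 0 /\ X *m (1%:M - V *m V^T) = 0.
Proof.
case=> -> UU VV _ _; split.
  by rewrite !mulmxA mulmxBl mul1mx -(mulmxA U) UU mulmx1 subrr !mul0mx.
by rewrite -!mulmxA mulmxBr mulmx1 (mulmxA V^T) VV mul1mx subrr !mulmx0.
Qed.

Section TangentSpace.
Variables (R : rcfType) (n1 n2 r : nat) (U : 'M[R]_(n1, r)) (V : 'M[R]_(n2, r)).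

Lemma in_tangentB A B : in_tangent U V A -> in_tangent U V B -> in_tangent U V (A - B).
Proof.
move=> [P1 [Q1 ->]] [P2 [Q2 ->]]; exists (P1 - P2), (Q1 - Q2).
by rewrite linearB /= mulmxBr mulmxBl addrACA opprD.
Qed.

Lemma in_tangent_sub_compl X :
  in_tangent U V (X - (1%:M - U *m U^T) *m X *m (1%:M - V *m V^T)).
Proof.
exists ((1%:M - U *m U^T) *m X *m V), (X^T *m U).
rewrite trmx_mul trmxK !mulmxBl !mulmxBr !mul1mx !mulmx1 !mulmxA.
by rewrite opprB opprD opprK addrCA addNKr addrAC addrA.
Qed.

Lemma wproj_dist_le eps G Pr X T : is_wproj eps G U V Pr -> in_tangent U V T ->
  winner eps G (X - Pr X) (X - Pr X) <= winner eps G (X - T) (X - T).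
Proof.
move=> /(_ X) [PrT orth] TT; rewrite !winnerE.
have -> : X - T = (X - Pr X) + (Pr X - T) by rewrite addrA subrK.
apply: wdot_orth_le; first exact: wweight_ge0.
by rewrite -winnerE orth //; apply: in_tangentB.
Qed.

End TangentSpace.

Lemma sqr_sigma_min_le_eigenvalue (R : rcfType) n1 n2 (X : 'M[R]_(n1, n2)) s d
    (a : 'cV[R]_n2) :
  is_sigma_min X s -> a != 0 -> X^T *m X *m a = d *: a -> d != 0 -> s ^+ 2 <= d.
Proof.
case=> s_gt0 _ s_min an0 Ha dn0.
have Xsq b : X^T *m X *m b = d *: b -> sqfrob (X *m b) = d * sqfrob b.
  by move=> Hb; rewrite !sqfrob_tr trmx_mul -mulmxA (mulmxA X^T) Hb -scalemxAr linearZ.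
have a_gt0 : 0 < sqfrob a.
  by rewrite lt_def sqfrob_ge0 andbT; apply: contra_neq an0; apply: sqfrob0_eq0.
have d_gt0 : 0 < d by rewrite lt_def dn0 -(pmulr_lge0 _ a_gt0) -Xsq ?sqfrob_ge0.
pose sigma := Num.sqrt d; pose v := (Num.sqrt (sqfrob a))^-1 *: a.
have sigma_gt0 : 0 < sigma by rewrite sqrtr_gt0.
have sigma2 : sigma ^+ 2 = d by rewrite sqr_sqrtr ?ltW.
have v1 : sqfrob v = 1 by rewrite sqfrobZ exprVn sqr_sqrtr ?ltW // mulVf ?gt_eqF.
have Hv : X^T *m X *m v = d *: v by rewrite -scalemxAr Ha !scalerA mulrC.
suff /(s_min _ sigma_gt0) : is_singular_value X sigma.
  by move=> le_s; rewrite -sigma2 lerXn2r // nnegrE ltW.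
split; first exact: ltW.
exists (sigma^-1 *: (X *m v)), v; split.
- by rewrite sqfrob_cV sqfrobZ Xsq // v1 mulr1 exprVn sigma2 mulVf ?gt_eqF.
- by rewrite sqfrob_cV v1.
- by rewrite scalerA mulfV ?gt_eqF // scale1r.
- by rewrite -scalemxAr mulmxA Hv scalerA -sigma2 expr2 mulKf ?gt_eqF.
Qed.

(* The spectral theorem of MathComp is stated over a numClosedFieldType: X^T X is
   diagonalised over R[i], and real eigenvectors are recovered as real or imaginary
   parts of complex ones. *)
Section Complexification.
Variable R : rcfType.
Local Notation C := R[i].
Local Notation cmx := (map_mx (real_complex R)).
Local Notation Remx := (map_mx (@complex.Re R)).
Local Notation Immx := (map_mx (@complex.Im R)).
Local Open Scope sesquilinear_scope.

Lemma Re_cplx_mulmx m n p (M : 'M[R]_(m, n)) (v : 'M[C]_(n, p)) :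
  Remx (cmx M *m v) = M *m Remx v.
Proof.
apply/matrixP => i j; rewrite !mxE (@raddf_sum _ _ (@complex.Re R : Rcomplex R -> R)).
by apply: eq_bigr => k _; rewrite !mxE; case: (v k j) => a b /=; rewrite mul0r subr0.
Qed.

Lemma Im_cplx_mulmx m n p (M : 'M[R]_(m, n)) (v : 'M[C]_(n, p)) :
  Immx (cmx M *m v) = M *m Immx v.
Proof.
apply/matrixP => i j; rewrite !mxE (@raddf_sum _ _ (@complex.Im R : Rcomplex R -> R)).
by apply: eq_bigr => k _; rewrite !mxE; case: (v k j) => a b /=; rewrite mul0r addr0.
Qed.

Lemma Re_cplx m n (M : 'M[R]_(m, n)) : Remx (cmx M) = M.
Proof. by apply/matrixP => i j; rewrite !mxE. Qed.

Lemma real_eigenvector n (A : 'M[R]_n) (d : R) (q : 'cV[C]_n) :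
  q != 0 -> cmx A *m q = (d%:C)%C *: q -> exists2 a : 'cV[R]_n, a != 0 & A *m a = d *: a.
Proof.
move=> qn0 Aq.
have eig (f : C -> R) : (forall z, f ((d%:C)%C * z) = d * f z) ->
    map_mx f (cmx A *m q) = A *m map_mx f q -> A *m map_mx f q = d *: map_mx f q.
  by move=> fM <-; rewrite Aq; apply/matrixP => i j; rewrite !mxE fM.
have [Re0|] := eqVneq (Remx q) 0; last first.
  move=> Ren0; exists (Remx q) => //; apply: eig (Re_cplx_mulmx _ _).
  by case=> a b /=; rewrite mul0r subr0.
have [Im0|] := eqVneq (Immx q) 0; last first.
  move=> Imn0; exists (Immx q) => //; apply: eig (Im_cplx_mulmx _ _).
  by case=> a b /=; rewrite mul0r addr0.
case/eqP: qn0; apply/matrixP => i j.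
move/matrixP/(_ i j): Re0; move/matrixP/(_ i j): Im0; rewrite !mxE.
by case: (q i j) => a b /= -> ->.
Qed.

Lemma cmx_conjC m n (M : 'M[R]_(m, n)) : (cmx M) ^ conjC = cmx M.
Proof. by apply/matrixP => i j; rewrite !mxE; exact: conjc_real. Qed.

Lemma symmetric_unitary_diag n (A : 'M[R]_n) : A^T = A ->
  exists2 P : 'M[C]_n, P \is unitarymx &
    exists d : 'rV[R]_n, cmx A = P ^t* *m diag_mx (cmx d) *m P.
Proof.
move=> AT; have Aherm : cmx A \is hermsymmx.
  by apply/is_hermitianmxP; rewrite expr0 scale1r map_trmx AT cmx_conjC.
have Dreal := hermitian_spectral_diag_real Aherm.
have /orthomx_spectralP := hermitian_normalmx Aherm.
rewrite invmx_unitary ?spectral_unitarymx // => AE.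
exists (spectralmx (cmx A)); first exact: spectral_unitarymx.
exists (Remx (spectral_diag (cmx A))); rewrite [LHS]AE; congr (_ *m diag_mx _ *m _).
apply/matrixP => i j; rewrite !mxE complexRe; apply/esym/Creal_ReP.
exact: (mxOverP Dreal).
Qed.

Definition csqfrob m n (M : 'M[C]_(m, n)) : C := \sum_i \sum_j `|M i j| ^+ 2.

Lemma csqfrob_tr m n (M : 'M[C]_(m, n)) : csqfrob M = \tr (M ^t* *m M).
Proof.
rewrite /csqfrob /mxtrace exchange_big; apply: eq_bigr => j _; rewrite mxE.
by apply: eq_bigr => i _; rewrite !mxE normCK mulrC.
Qed.

Lemma csqfrob0_eq0 m n (M : 'M[C]_(m, n)) : csqfrob M = 0 -> M = 0.
Proof.
move=> M0; apply/matrixP => i j; apply/eqP; rewrite mxE -normr_eq0 -sqrf_eq0; apply/eqP.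
exact: psumr2_eq0P (fun i j => exprn_ge0 2 (normr_ge0 _)) M0 i j.
Qed.

Lemma csqfrob_cmx m n (M : 'M[R]_(m, n)) : csqfrob (cmx M) = (sqfrob M)%:C%C.
Proof.
rewrite /csqfrob /sqfrob !rmorph_sum; apply: eq_bigr => i _.
rewrite !rmorph_sum; apply: eq_bigr => j _.
by rewrite mxE rmorphXn real_normK //; apply/CrealP; exact: conjc_real.
Qed.

Lemma sqfrob_Re_le m n (M : 'M[C]_(m, n)) : (sqfrob (Remx M))%:C%C <= csqfrob M.
Proof.
rewrite /csqfrob /sqfrob !rmorph_sum; apply: ler_sum => i _.
rewrite !rmorph_sum; apply: ler_sum => j _.
rewrite mxE rmorphXn normC2_Re_Im -complexRe lerDl.
by rewrite -realEsqr Creal_Im.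
Qed.

Lemma csqfrob_unitary_mul n p (P : 'M[C]_n) (M : 'M[C]_(n, p)) :
  P \is unitarymx -> csqfrob (P ^t* *m M) = csqfrob M.
Proof.
move=> /unitarymxP PP.
by rewrite !csqfrob_tr trmx_mul map_mxM trmxCK mulmxA -(mulmxA _ P) PP mulmx1.
Qed.

Lemma diag_gram_preimage m n (Z : 'M[C]_(m, n)) (d : 'rV[R]_n) (c : R) :
  0 <= c -> Z ^t* *m Z = diag_mx (cmx d) -> (forall k, d 0 k != 0 -> c <= d 0 k) ->
  forall y : 'cV[C]_n,
    exists2 y', Z *m y' = Z *m y & (c%:C)%C * csqfrob y' <= csqfrob (Z *m y).
Proof.
move=> c_ge0 ZZ c_le y.
have col0 k : d 0 k = 0 -> col k Z = 0.
  move=> dk0; apply: csqfrob0_eq0; rewrite csqfrob_tr trace_mx11.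
  have <- : (Z ^t* *m Z) k k = 0 by rewrite ZZ !mxE eqxx mulr1n dk0.
  by rewrite !mxE; apply: eq_bigr => i _; rewrite !mxE.
pose y' := \col_k ((d 0 k != 0)%:R * y k 0).
exists y'.
  apply/colP => i; rewrite !mxE; apply: eq_bigr => k _; rewrite !mxE.
  have [dk0|_] := eqVneq (d 0 k) 0; last by rewrite mul1r.
  by have /colP/(_ i) := col0 k dk0; rewrite !mxE => ->; rewrite !mul0r.
have -> : csqfrob (Z *m y) = \sum_k (d 0 k)%:C%C * `|y k 0| ^+ 2.
  rewrite csqfrob_tr trmx_mul map_mxM mulmxA -(mulmxA _ _ Z) ZZ trace_mx11 mxE.
  by apply: eq_bigr => k _; rewrite mul_mx_diag !mxE normCK; ring.
rewrite /csqfrob mulr_sumr; apply: ler_sum => k _; rewrite big_ord1 mxE.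
have [dk0|dk0] := eqVneq (d 0 k) 0.
  by rewrite /= mulr0n mul0r normr0 expr0n /= mulr0 dk0 mul0r.
by rewrite /= mulr1n mul1r ler_wpM2r ?exprn_ge0 // lecR c_le.
Qed.

Lemma min_norm_preimage n1 n2 (X : 'M[R]_(n1, n2)) (c : R) : 0 <= c ->
  (forall d (a : 'cV[R]_n2), a != 0 -> X^T *m X *m a = d *: a -> d != 0 -> c <= d) ->
  forall w : 'cV[R]_n2, exists2 v, X *m v = X *m w & c * sqfrob v <= sqfrob (X *m w).
Proof.
move=> c_ge0 c_le_eig w.
have XXsym : (X^T *m X)^T = X^T *m X by rewrite trmx_mul trmxK.
have [P Pu [d XXE]] := symmetric_unitary_diag XXsym.
have PcP : P ^t* *m P = 1%:M by apply: mulmx1C; apply/unitarymxP.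
pose Z := cmx X *m P ^t*.
have ZZ : Z ^t* *m Z = diag_mx (cmx d).
  rewrite /Z trmx_mul map_mxM trmxCK map_trmx cmx_conjC mulmxA -(mulmxA P).
  rewrite -(map_mxM (real_complex R)) XXE !mulmxA (unitarymxP Pu) mul1mx.
  by rewrite -mulmxA (unitarymxP Pu) mulmx1.
have c_le k : d 0 k != 0 -> c <= d 0 k.
  move=> dk_neq0; pose q := col k (P ^t*).
  have qn0 : q != 0.
    apply/eqP => q0; have := col_mulmx P (P ^t*) k.
    rewrite (unitarymxP Pu) -/q q0 mulmx0 => /colP/(_ k).
    by rewrite !mxE eqxx => /eqP; rewrite oner_eq0.
  have Hq : cmx (X^T *m X) *m q = (d 0 k)%:C%C *: q.
    rewrite -col_mulmx XXE -!mulmxA (unitarymxP Pu) mulmx1.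
    by apply/colP => i; rewrite mxE mul_mx_diag !mxE mulrC.
  have [a an0 Ha] := real_eigenvector qn0 Hq.
  exact: c_le_eig an0 Ha dk_neq0.
have [y' Zy' le_y'] := diag_gram_preimage c_ge0 ZZ c_le (P *m cmx w).
have ZPw : Z *m (P *m cmx w) = cmx (X *m w).
  by rewrite /Z mulmxA -(mulmxA _ _ P) PcP mulmx1 map_mxM.
exists (Remx (P ^t* *m y')).
  by rewrite -Re_cplx_mulmx mulmxA -/Z Zy' ZPw Re_cplx.
rewrite -lecR rmorphM /= -[(sqfrob (X *m w))%:C%C]csqfrob_cmx -ZPw.
apply: le_trans le_y'; rewrite -(csqfrob_unitary_mul y' Pu).
by apply: ler_wpM2l (sqfrob_Re_le _); rewrite lecR.
Qed.

End Complexification.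

Lemma sqfrob_mul_sigma_min_le (R : rcfType) n1 n2 p q (X : 'M[R]_(n1, n2)) s
    (P : 'M[R]_(p, n1)) (Q : 'M[R]_(n2, q)) :
  is_sigma_min X s -> s ^+ 2 * sqfrob (P *m X *m Q) <= sqfrob (P *m X) * sqfrob (X *m Q).
Proof.
move=> smin_s; rewrite sqfrob_col [sqfrob (X *m Q)]sqfrob_col !mulr_sumr.
apply: ler_sum => j _; rewrite !col_mulmx.
have [v Xv le_v] := min_norm_preimage (sqr_ge0 s)
  (fun d a => sqr_sigma_min_le_eigenvalue smin_s) (col j Q).
rewrite -Xv in le_v; rewrite -mulmxA -Xv mulmxA.
apply: le_trans (ler_wpM2l (sqr_ge0 s) (sqfrob_mulmx_le _ _)) _.
by rewrite mulrCA ler_wpM2l ?sqfrob_ge0.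
Qed.

Lemma sqrt_le_chain (R : rcfType) (nu mu s D Y F W : R) :
  0 < nu -> 0 <= mu -> 0 < s -> 0 <= F ->
  D <= mu * Y -> s ^+ 2 * Y <= F ^+ 2 -> nu * F <= W ->
  Num.sqrt D <= Num.sqrt mu / (nu * s) * W.
Proof.
move=> nu_gt0 mu_ge0 s_gt0 F_ge0 DY YF FW.
have W_ge0 : 0 <= W := le_trans (mulr_ge0 (ltW nu_gt0) F_ge0) FW.
have K_ge0 : 0 <= Num.sqrt mu / (nu * s) * W.
  by rewrite !mulr_ge0 ?sqrtr_ge0 // invr_ge0 mulr_ge0 // ltW.
rewrite -(ger0_norm K_ge0) -sqrtr_sqr; apply: ler_wsqrtr; apply: le_trans DY _.
rewrite exprMn expr_div_n sqr_sqrtr // mulrAC -mulrA ler_wpM2l //.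
rewrite ler_pdivlMr ?exprn_gt0 ?mulr_gt0 // exprMn mulrCA [Y * _]mulrC.
apply: le_trans (ler_wpM2l (sqr_ge0 nu) YF) _.
by rewrite -exprMn lerXn2r // nnegrE mulr_ge0 // ltW.
Qed.

Lemma sqrt_div_le_root4_div (R : rcfType) (nu mu s : R) : 0 < nu -> nu <= mu -> 0 < s ->
  Num.sqrt mu / (nu * s) <= mu * root4 mu / (nu * Num.sqrt nu * root4 nu * s).
Proof.
move=> nu_gt0 le_nu_mu s_gt0; have mu_gt0 := lt_le_trans nu_gt0 le_nu_mu.
set q := root4 nu; set t := root4 mu.
have q_gt0 : 0 < q by rewrite !sqrtr_gt0.
have le_qt : q <= t := ler_root4 le_nu_mu.
have t_gt0 : 0 < t := lt_le_trans q_gt0 le_qt.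
have root4_pow4 (x : R) : 0 < x -> x = root4 x ^+ 4.
  by move=> x_gt0; rewrite (exprM _ 2 2) !sqr_root4 ?sqr_sqrtr // ?sqrtr_ge0 // ltW.
rewrite -(sqr_root4 (ltW nu_gt0)) -(sqr_root4 (ltW mu_gt0)) -/q -/t.
rewrite [X in X * t](root4_pow4 mu mu_gt0) (root4_pow4 nu nu_gt0) -/q -/t.
have -> : t ^+ 4 * t / (q ^+ 4 * q ^+ 2 * q * s) = t ^+ 2 / (q ^+ 4 * s) * (t / q) ^+ 3.
  by field; rewrite !gt_eqF.
apply: ler_peMr; first by rewrite divr_ge0 ?exprn_ge0 ?mulr_ge0 // ltW.
by rewrite exprn_ege1 // ler_pdivlMr // mul1r.
Qed.

Theorem lemma3p7 (R : rcfType) (n1 n2 r : nat) (G : 'M[R]_(n1, n2)) (eps : R)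
  (Xt X : 'M[R]_(n1, n2)) (Ut : 'M[R]_(n1, r)) (St : 'M[R]_r) (Vt : 'M[R]_(n2, r))
  (Pr : 'M[R]_(n1, n2) -> 'M[R]_(n1, n2)) (smin : R) :
  0 < eps ->
  \rank Xt = r -> \rank X = r ->
  is_compact_svd Xt Ut St Vt ->
  is_wproj eps G Ut Vt Pr ->
  is_sigma_min X smin ->
  let nu := Num.sqrt eps in
  let mu := Num.sqrt (eps + vee_norm G ^+ 2) in
  wnorm eps G (X - Pr X)
    <= (mu * root4 mu) / (nu * Num.sqrt nu * root4 nu * smin)
       * wnorm eps G (X - Xt) ^+ 2.
Proof.
move=> eps_gt0 _ _ svd proj smin_min; cbv zeta.
set nu := Num.sqrt eps; set mu := Num.sqrt (eps + vee_norm G ^+ 2).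
have [smin_gt0 _ _] := smin_min; have eps_ge0 := ltW eps_gt0.
have nu_gt0 : 0 < nu by rewrite sqrtr_gt0.
have le_nu_mu : nu <= mu by rewrite ler_wsqrtr // lerDl sqr_ge0.
have [[_ UtU VtV _ _] [PXt XtQ]] := (svd, compact_svd_compl_proj svd).
set E := X - Xt; set Pm := 1%:M - Ut *m Ut^T; set Qm := 1%:M - Vt *m Vt^T.
have PmX : Pm *m X = Pm *m E by rewrite mulmxBr PXt subr0.
have XQm : X *m Qm = E *m Qm by rewrite mulmxBl XtQ subr0.
have resid_le : wdot (wweight eps G) (X - Pr X) (X - Pr X) <= mu * sqfrob (Pm *m X *m Qm).
  rewrite -winnerE.
  apply: le_trans (wproj_dist_le X proj (in_tangent_sub_compl Ut Vt X)) _.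
  by rewrite subKr winnerE wdot_le // => i j; apply: wweight_le.
have PXQ_le : smin ^+ 2 * sqfrob (Pm *m X *m Qm) <= sqfrob E ^+ 2.
  apply: le_trans (sqfrob_mul_sigma_min_le Pm Qm smin_min) _.
  rewrite PmX XQm expr2 ler_pM ?sqfrob_ge0 //.
    exact: sqfrob_compl_proj_mul_le.
  exact: sqfrob_mul_compl_proj_le.
have frobE_le : nu * sqfrob E <= wdot (wweight eps G) E E.
  by apply: wdot_ge => i j; apply: wweight_ge.
rewrite !wnormE sqr_sqrtr; last exact/wdot_self_ge0/wweight_ge0.
apply: le_trans (sqrt_le_chain nu_gt0 _ smin_gt0 (sqfrob_ge0 E) resid_le PXQ_le frobE_le) _.
  exact: le_trans (ltW nu_gt0) le_nu_mu.
rewrite ler_wpM2r ?sqrt_div_le_root4_div //.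
exact/wdot_self_ge0/wweight_ge0.
Qed.
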